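(* Let $1\le p<\infty$ and $f\in BV_p[0,1]$. For every $\varepsilon>0$ there exists $\delta>0$ such that whenever $0\le x_1<x_2<\dots<x_m\le1$ and $|f(x_j)|<\delta$ for all $j\in\{1,\dots,m\}$, one has $\left(\sum_{j=1}^{m-1}|f(x_{j+1})-f(x_j)|^p\right)^{1/p}<\varepsilon$.
   Context: For $1\le p<\infty$, $BV_p[0,1]$ is the set of functions $f:[0,1]\to\mathbb F$ ($\mathbb F\in\{\mathbb R,\mathbb C\}$) with finite total Wiener $p$-variation $\operatorname{Var}_p(f,[0,1]):=\sup\sum_{j=1}^m|f(t_j)-f(t_{j-1})|^p$, the supremum over all partitions $0=t_0<t_1<\dots<t_m=1$. *)

From Stdlib Require Import Reals Lra.
Open Scope R_scope.

(* Scalars: F = C, represented as pairs of reals; the real case R is the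
   sub-case of functions with zero imaginary part (isometric embedding). *)
Definition Cpx : Type := (R * R)%type.
Definition Csub (z w : Cpx) : Cpx := (fst z - fst w, snd z - snd w).
Definition Cmod (z : Cpx) : R := sqrt (fst z ^ 2 + snd z ^ 2).

Definition rpow (x p : R) : R := if Rlt_dec 0 x then Rpower x p else 0.

Fixpoint rsum (n : nat) (g : nat -> R) : R :=
  match n with
  | O => 0
  | S k => rsum k g + g k
  end.

Definition is_partition01 (m : nat) (t : nat -> R) : Prop :=
  t O = 0 /\ t m = 1 /\ (forall i, (i < m)%nat -> t i < t (S i)).

Definition pvar_sum (p : R) (f : R -> Cpx) (m : nat) (t : nat -> R) : R :=
  rsum m (fun i => rpow (Cmod (Csub (f (t (S i))) (f (t i)))) p).

Definition BVp (p : R) (f : R -> Cpx) : Prop :=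
  exists M : R, forall (m : nat) (t : nat -> R),
    is_partition01 m t -> pvar_sum p f m t <= M.

From Stdlib Require Import Reals Lra Lia List Sorted Classical.
From Coquelicot Require Complex.
Open Scope R_scope.
Import ListNotations.

(* Call y small at level lam if |f y| < lam, and let L be the limit, as lam decreases
   to 0, of the supremum of the p-variation sums along increasing chains of points small
   at level lam; it is finite because f is in BV_p.  Interleave a chain C1 of level lam1
   with a chain C2 of a level lam2 so small that the (2 lam2)^p bound on the jumps inside
   C2, multiplied by the length of C1, is negligible.  A jump of C1 from a to b that is
   broken by points z <= w of C2 is at most three jumps, whence
     3^-p |f b - f a|^p <= |f z - f a|^p + |f b - f w|^p + (2 lam2)^p,
   so the merged chain, again of level lam1, has sum at least 3^-p S(C1) + S(C2) - o(1).
   For nearly optimal C1 and C2 this reads L >= (1 + 3^-p) L, hence L = 0. *)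

Lemma Cmod_ge0 (z : Cpx) : 0 <= Cmod z.
Proof. exact (Complex.Cmod_ge_0 z). Qed.

Lemma Cmod_sub_triangle (a b c : Cpx) : Cmod (Csub a c) <= Cmod (Csub a b) + Cmod (Csub b c).
Proof.
  replace (Csub a c) with (Complex.Cplus (Csub a b) (Csub b c))
    by (unfold Csub, Complex.Cplus; simpl; f_equal; ring).
  exact (Complex.Cmod_triangle _ _).
Qed.

Lemma Cmod_sub_le (a b : Cpx) : Cmod (Csub a b) <= Cmod a + Cmod b.
Proof.
  change (Complex.Cmod (Complex.Cplus a (Complex.Copp b))
    <= Complex.Cmod a + Complex.Cmod b).
  rewrite <- (Complex.Cmod_opp b).
  exact (Complex.Cmod_triangle _ _).
Qed.

Lemma rpow_ge0 (x p : R) : 0 <= rpow x p.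
Proof. unfold rpow; destruct (Rlt_dec 0 x); [left; apply exp_pos | lra]. Qed.

Lemma rpow_pos (x p : R) : 0 < x -> 0 < rpow x p.
Proof. intros Hx; unfold rpow; destruct (Rlt_dec 0 x); [apply exp_pos | lra]. Qed.

Lemma rpow_le_compat (x y p : R) : 0 < p -> 0 <= x <= y -> rpow x p <= rpow y p.
Proof.
  intros Hp Hxy; unfold rpow.
  destruct (Rlt_dec 0 x), (Rlt_dec 0 y); try lra.
  - apply Rle_Rpower_l; lra.
  - left; apply exp_pos.
Qed.

Lemma rpow_lt_compat (x y p : R) : 0 < p -> 0 <= x < y -> rpow x p < rpow y p.
Proof.
  intros Hp Hxy; unfold rpow.
  destruct (Rlt_dec 0 x), (Rlt_dec 0 y); try lra.
  - apply Rlt_Rpower_l; lra.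
  - apply exp_pos.
Qed.

Lemma rpow_mult_distr (x y p : R) : 0 <= x -> 0 <= y -> rpow (x * y) p = rpow x p * rpow y p.
Proof.
  intros Hx Hy; unfold rpow.
  destruct (Rlt_dec 0 x), (Rlt_dec 0 y), (Rlt_dec 0 (x * y)); try ring.
  - rewrite Rpower_mult_distr; auto.
  - exfalso; apply n; apply Rmult_lt_0_compat; auto.
  - replace y with 0 in r0 by lra; lra.
  - replace x with 0 in r0 by lra; lra.
  - replace x with 0 in r by lra; lra.
Qed.

Lemma rpow_rpow (x a b : R) : 0 < x -> rpow (rpow x a) b = rpow x (a * b).
Proof.
  intros Hx; unfold rpow at 2 3; destruct (Rlt_dec 0 x) as [_|]; [|lra].
  unfold rpow; destruct (Rlt_dec 0 (Rpower x a)) as [_|n].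
  - apply Rpower_mult.
  - exfalso; apply n, exp_pos.
Qed.

Lemma rpow_1 (x : R) : 0 < x -> rpow x 1 = x.
Proof. intros Hx; unfold rpow; destruct (Rlt_dec 0 x); [apply Rpower_1 | ]; lra. Qed.

Lemma rpow_inv_lt (s e p : R) : 0 < p -> 0 < e -> s < rpow e p -> rpow s (1 / p) < e.
Proof.
  intros Hp He Hs.
  destruct (Rlt_dec 0 s) as [Hs0|Hs0].
  - rewrite <- (rpow_1 e He).
    replace 1 with (p * (1 / p)) at 2 by (field; lra).
    rewrite <- rpow_rpow by exact He.
    apply rpow_lt_compat; [|lra].
    unfold Rdiv; rewrite Rmult_1_l; apply Rinv_0_lt_compat, Hp.
  - unfold rpow at 1; destruct (Rlt_dec 0 s); lra.
Qed.

(* The largest of the three terms dominates the sum up to a factor 3. *)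
Lemma rpow_sum3_le (x y z p : R) : 0 < p -> 0 <= x -> 0 <= y -> 0 <= z ->
  rpow (x + y + z) p <= rpow 3 p * (rpow x p + rpow y p + rpow z p).
Proof.
  intros Hp Hx Hy Hz.
  set (mx := Rmax x (Rmax y z)).
  assert (Hmx : x <= mx /\ y <= mx /\ z <= mx).
  { unfold mx; pose proof (Rmax_l x (Rmax y z)); pose proof (Rmax_r x (Rmax y z)).
    pose proof (Rmax_l y z); pose proof (Rmax_r y z); lra. }
  assert (Hpow : rpow mx p <= rpow x p + rpow y p + rpow z p).
  { pose proof (rpow_ge0 x p); pose proof (rpow_ge0 y p); pose proof (rpow_ge0 z p).
    unfold mx, Rmax; destruct (Rle_dec y z), (Rle_dec x _); lra. }
  apply Rle_trans with (rpow (3 * mx) p).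
  - apply rpow_le_compat; lra.
  - rewrite rpow_mult_distr by lra.
    apply Rmult_le_compat_l; [apply rpow_ge0 | exact Hpow].
Qed.

Lemma StronglySorted_app_iff {A : Type} (lt : A -> A -> Prop) (l1 l2 : list A) :
  StronglySorted lt (l1 ++ l2) <->
  StronglySorted lt l1 /\ StronglySorted lt l2 /\ (forall x y, In x l1 -> In y l2 -> lt x y).
Proof.
  induction l1 as [|a l1 IH]; simpl.
  - split; [intros H; repeat split; auto; [constructor | tauto] | tauto].
  - split.
    + intros [Hs Ha]%StronglySorted_inv.
      apply Forall_app in Ha as [Ha1 Ha2]; apply IH in Hs as (Hs1 & Hs2 & Hx).
      repeat split; auto; [constructor; auto|].
      intros x y [<-|Hx1] Hy; [exact (proj1 (Forall_forall _ _) Ha2 y Hy) | auto].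
    + intros ([Hs1 Ha1]%StronglySorted_inv & Hs2 & Hx).
      constructor; [apply IH; auto | apply Forall_app; split; auto].
      apply Forall_forall; intros y Hy; auto.
Qed.

Lemma StronglySorted_map_seq (x : nat -> R) (k m : nat) :
  StronglySorted Rlt (map x (seq k m)) <->
  (forall j, (k <= j)%nat -> (S j < k + m)%nat -> x j < x (S j)).
Proof.
  split; [intros H%StronglySorted_Sorted | intros H; apply Sorted_StronglySorted; [exact Rlt_trans|]];
    revert k H; induction m as [|m IH]; intros k H; simpl in *; try (solve [constructor] || lia).
  - apply Sorted_inv in H as [Hs Hd].
    intros j Hkj Hjm; destruct (Nat.eq_dec j k) as [->|Hne].
    + destruct m as [|m]; [lia|]; exact (HdRel_inv Hd).
    + apply (IH (S k)); [exact Hs | lia | lia].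
  - constructor; [apply IH; intros; apply H; lia|].
    destruct m as [|m]; constructor; apply H; lia.
Qed.

Lemma last_cons {A : Type} (a x : A) (l : list A) : last (a :: l) x = last l a.
Proof.
  revert a x; induction l as [|b l IH]; intros a x; [reflexivity|].
  change (last (b :: l) x = last (b :: l) a); now rewrite !IH.
Qed.

Lemma Forall_last {A : Type} (P : A -> Prop) (a : A) (l : list A) :
  P a -> Forall P l -> P (last l a).
Proof.
  revert a; induction l as [|b l IH]; intros a Ha Hl; [exact Ha|].
  rewrite last_cons; apply Forall_inv_tail in Hl as Hl'; apply IH; [exact (Forall_inv Hl) | exact Hl'].
Qed.

Lemma map_nth_seq {A : Type} (l : list A) (x : A) :
  map (fun i => nth i l x) (seq 0 (length l)) = l.
Proof.
  induction l as [|a l IH]; [reflexivity|].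
  simpl; rewrite <- seq_shift, map_map; f_equal; exact IH.
Qed.

Lemma rsum_ext (n : nat) (g h : nat -> R) :
  (forall i, (i < n)%nat -> g i = h i) -> rsum n g = rsum n h.
Proof. induction n as [|n IH]; intros H; simpl; [reflexivity|]. rewrite IH, H; auto. Qed.

Lemma rsum_shift (n : nat) (g : nat -> R) : rsum (S n) g = g O + rsum n (fun i => g (S i)).
Proof. induction n as [|n IH]; simpl in *; [ring|]. rewrite IH; ring. Qed.

Section ChainSum.

Variable d : R -> R -> R.

Fixpoint chain_sum (l : list R) : R :=
  match l with
  | x :: ((y :: _) as t) => d x y + chain_sum t
  | _ => 0
  end.

Lemma chain_sum_app (x y : R) (l1 l2 : list R) :
  chain_sum (x :: l1 ++ y :: l2) = chain_sum (x :: l1) + d (last l1 x) y + chain_sum (y :: l2).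
Proof.
  revert x; induction l1 as [|z l1 IH]; intros x; [simpl; ring|].
  change (d x z + chain_sum (z :: l1 ++ y :: l2) =
          d x z + chain_sum (z :: l1) + d (last (z :: l1) x) y + chain_sum (y :: l2)).
  rewrite IH, last_cons; ring.
Qed.

Lemma chain_sum_map_seq (x : nat -> R) (k m : nat) :
  chain_sum (map x (seq k m)) = rsum (m - 1) (fun i => d (x (k + i)%nat) (x (k + S i)%nat)).
Proof.
  revert k; induction m as [|[|m] IH]; intros k; try reflexivity.
  change (d (x k) (x (S k)) + chain_sum (map x (seq (S k) (S m))) =
          rsum (S m) (fun i => d (x (k + i)%nat) (x (k + S i)%nat))).
  rewrite IH, rsum_shift; replace (S m - 1)%nat with m by lia.
  f_equal; [rewrite Nat.add_0_r, Nat.add_1_r; reflexivity|].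
  apply rsum_ext; intros i _; f_equal; f_equal; lia.
Qed.

Hypothesis d_ge0 : forall x y, 0 <= d x y.

Lemma chain_sum_cons_ge (a : R) (l : list R) : chain_sum l <= chain_sum (a :: l).
Proof. destruct l as [|b l]; simpl; [lra|]; pose proof (d_ge0 a b); lra. Qed.

Lemma chain_sum_app_ge (l1 l2 : list R) : chain_sum l1 + chain_sum l2 <= chain_sum (l1 ++ l2).
Proof.
  destruct l1 as [|x l1]; [simpl; lra|]; destruct l2 as [|y l2].
  - rewrite app_nil_r; simpl; lra.
  - simpl app; rewrite chain_sum_app; pose proof (d_ge0 (last l1 x) y); lra.
Qed.

End ChainSum.

Definition chain (G : R -> Prop) (l : list R) : Prop := StronglySorted Rlt l /\ Forall G l.

Lemma StronglySorted_split_at (b : R) (l : list R) : StronglySorted Rlt l ->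
  exists P Q, l = P ++ Q /\ Forall (fun x => x < b) P /\ Forall (Rle b) Q.
Proof.
  induction l as [|x l IH]; intros Hs.
  - exists [], []; repeat split; constructor.
  - apply StronglySorted_inv in Hs as [Hs Hx].
    destruct (Rlt_dec x b) as [Hxb|Hxb].
    + destruct (IH Hs) as (P & Q & -> & HP & HQ).
      exists (x :: P), Q; repeat split; auto.
    + exists [], (x :: l); repeat split; [constructor|].
      constructor; [lra|].
      exact (Forall_impl _ (fun y (Hy : x < y) => Rlt_le _ _ (Rle_lt_trans b x y (Rnot_lt_le _ _ Hxb) Hy)) Hx).
Qed.

Section Merge.

Variables (d : R -> R -> R) (G1 G2 : R -> Prop) (k th : R).

Hypothesis d_ge0 : forall x y, 0 <= d x y.
Hypothesis G2_G1 : forall x, G2 x -> G1 x.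
Hypothesis d_small : forall x y, G2 x -> G2 y -> d x y <= th.
Hypothesis d_detour : forall a b z w, G2 z -> G2 w -> k * d a b <= d a z + d w b + th.
Hypothesis th_ge0 : 0 <= th.
Hypothesis k_le1 : k <= 1.

Lemma chain_sum_app_small (P Q : list R) : Forall G2 P -> Forall G2 Q ->
  chain_sum d (P ++ Q) <= chain_sum d P + th + chain_sum d Q.
Proof.
  intros HP HQ; destruct P as [|x P]; [simpl; lra|]; destruct Q as [|y Q].
  - rewrite app_nil_r; simpl; lra.
  - simpl app; rewrite chain_sum_app.
    assert (d (last P x) y <= th).
    { apply d_small; [apply Forall_last; [exact (Forall_inv HP) | exact (Forall_inv_tail HP)]
                     | exact (Forall_inv HQ)]. }
    lra.
Qed.

Lemma chain_split_at (b : R) (l : list R) : chain G2 l ->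
  exists P Q, StronglySorted Rlt P /\ StronglySorted Rlt Q /\ incl P l /\ incl Q l /\
    Forall (fun x => x < b) P /\ Forall (Rlt b) Q /\
    chain_sum d l <= chain_sum d P + chain_sum d Q + 2 * th.
Proof.
  intros [Hs HG]; destruct (StronglySorted_split_at b l Hs) as (P & Q & -> & HP & HQ).
  apply StronglySorted_app_iff in Hs as (HsP & HsQ & _); apply Forall_app in HG as [HGP HGQ].
  pose proof (chain_sum_app_small P Q HGP HGQ) as Hjoin.
  destruct Q as [|y Q].
  - exists P, []; repeat split; auto using incl_appl, incl_refl, incl_nil_l; lra.
  - apply StronglySorted_inv in HsQ as [HsQ HyQ]; pose proof (Forall_inv HQ) as Hby.
    destruct (Req_dec y b) as [->|Hyb].
    + exists P, Q; repeat split; auto using incl_appl, incl_refl.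
      * apply incl_appr, incl_tl, incl_refl.
      * pose proof (chain_sum_app_small [b] Q (Forall_cons _ (Forall_inv HGQ) (Forall_nil _))
                      (Forall_inv_tail HGQ)); simpl in *; lra.
    + exists P, (y :: Q); repeat split; auto using incl_appl, incl_appr, incl_refl;
        [constructor; auto | | lra].
      constructor; [simpl in Hby; lra|].
      apply (Forall_impl _ (fun x (Hx : y < x) => Rle_lt_trans b y x Hby Hx) HyQ).
Qed.

Lemma chain_sum_detour (a b : R) (P : list R) : Forall G2 P ->
  k * d a b + chain_sum d P - th <= chain_sum d (a :: P) + d (last P a) b.
Proof.
  intros HP; destruct P as [|z P].
  - simpl; pose proof (d_ge0 a b); nra.
  - rewrite last_cons.
    change (chain_sum d (a :: z :: P)) with (d a z + chain_sum d (z :: P)).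
    pose proof (d_detour a b z (last P z) (Forall_inv HP)
                  (Forall_last _ _ _ (Forall_inv HP) (Forall_inv_tail HP))); lra.
Qed.


Lemma chain_merge_from (a : R) (l1 l2 : list R) :
  chain G1 (a :: l1) -> chain G2 l2 -> Forall (Rlt a) l2 ->
  exists l, chain G1 (a :: l) /\
    k * chain_sum d (a :: l1) + chain_sum d l2 - 3 * INR (length l1) * th <= chain_sum d (a :: l).
Proof.
  revert a l2; induction l1 as [|b l1 IH]; intros a l2 [Hs1 HG1] [Hs2 HG2] Ha.
  - exists l2; split.
    + split; [constructor; auto|constructor; [exact (Forall_inv HG1)|]].
      exact (Forall_impl _ G2_G1 HG2).
    + pose proof (chain_sum_cons_ge d d_ge0 a l2); simpl (chain_sum d [a]); simpl INR; lra.
  - destruct (chain_split_at b l2 (conj Hs2 HG2))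
      as (P & Q & HsP & HsQ & HPl2 & HQl2 & HPb & HbQ & Hsplit).
    apply StronglySorted_inv in Hs1 as [Hs1 Hab]; apply Forall_inv in Hab as Hab'.
    assert (HGP : Forall G2 P) by exact (incl_Forall HPl2 HG2).
    destruct (IH b Q (conj Hs1 (Forall_inv_tail HG1)) (conj HsQ (incl_Forall HQl2 HG2)) HbQ)
      as (l & [Hsl HGl] & Hl).
    exists (P ++ b :: l); split; [split|].
    + change (StronglySorted Rlt ((a :: P) ++ b :: l)); apply StronglySorted_app_iff.
      repeat split; [constructor; [exact HsP | exact (incl_Forall HPl2 Ha)] | exact Hsl |].
      intros x y Hx Hy; apply StronglySorted_inv in Hsl as [_ Hbl].
      assert (Hxb : x < b) by (destruct Hx as [<-|Hx]; [exact Hab' | exact (proj1 (Forall_forall _ _) HPb x Hx)]).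
      destruct Hy as [<-|Hy]; [exact Hxb | pose proof (proj1 (Forall_forall _ _) Hbl y Hy); lra].
    + constructor; [exact (Forall_inv HG1)|].
      apply Forall_app; split; [exact (Forall_impl _ G2_G1 HGP) | exact HGl].
    + rewrite chain_sum_app.
      pose proof (chain_sum_detour a b P HGP).
      change (chain_sum d (a :: b :: l1)) with (d a b + chain_sum d (b :: l1)).
      change (length (b :: l1)) with (S (length l1)); rewrite S_INR; nra.
Qed.

Lemma chain_merge (l1 l2 : list R) : chain G1 l1 -> chain G2 l2 ->
  exists l, chain G1 l /\
    k * chain_sum d l1 + chain_sum d l2 - 3 * INR (length l1) * th <= chain_sum d l.
Proof.
  intros [Hs1 HG1] [Hs2 HG2]; destruct l1 as [|a l1].
  - exists l2; split; [split; [exact Hs2 | exact (Forall_impl _ G2_G1 HG2)] | simpl; lra].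
  - destruct (chain_split_at a l2 (conj Hs2 HG2))
      as (P & Q & HsP & HsQ & HPl2 & HQl2 & HPa & HaQ & Hsplit).
    destruct (chain_merge_from a l1 Q (conj Hs1 HG1) (conj HsQ (incl_Forall HQl2 HG2)) HaQ)
      as (l & [Hsl HGl] & Hl).
    exists (P ++ a :: l); split; [split|].
    + apply StronglySorted_app_iff; repeat split; [exact HsP | exact Hsl|].
      intros x y Hx Hy; apply StronglySorted_inv in Hsl as [_ Hal].
      pose proof (proj1 (Forall_forall _ _) HPa x Hx).
      destruct Hy as [<-|Hy]; [lra | pose proof (proj1 (Forall_forall _ _) Hal y Hy); lra].
    + apply Forall_app; split; [exact (Forall_impl _ G2_G1 (incl_Forall HPl2 HG2)) | exact HGl].
    + pose proof (chain_sum_app_ge d d_ge0 P (a :: l)).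
      change (length (a :: l1)) with (S (length l1)); rewrite S_INR; lra.
Qed.

End Merge.

Lemma mergeable_levels_vanish (A : R -> R -> Prop) (k M : R) :
  0 < k ->
  (forall lam s s', A lam s -> s' <= s -> A lam s') ->
  (forall lam, 0 < lam -> A lam 0) ->
  (forall lam s, A lam s -> s <= M) ->
  (forall lam1 s1 eta, 0 < lam1 -> 0 < eta -> A lam1 s1 ->
     exists lam2, 0 < lam2 /\ forall s2, A lam2 s2 -> A lam1 (k * s1 + s2 - eta)) ->
  forall e, 0 < e -> exists lam, 0 < lam /\ forall s, A lam s -> s < e.
Proof.
  intros Hk Hdown Hzero Hbound Hmerge.
  set (E := fun s => forall lam, 0 < lam -> A lam s).
  assert (HE : bound E) by (exists M; intros s Hs; exact (Hbound 1 s (Hs 1 Rlt_0_1))).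
  (* [L] is the limit, as [lam] decreases to 0, of the supremum of [s] with [A lam s]. *)
  destruct (completeness E HE (ex_intro _ 0 Hzero)) as [L [HLub HLlub]].
  assert (HL0 : 0 <= L) by exact (HLub 0 Hzero).
  assert (Hbelow : forall eta, 0 < eta -> exists s, E s /\ L - eta < s).
  { intros eta Heta; apply NNPP; intros Hn.
    enough (L <= L - eta) by lra.
    apply HLlub; intros s Hs; apply Rnot_lt_le; intros Hlt; apply Hn; exists s; auto. }
  assert (Habove : forall eta, 0 < eta ->
            exists lam, 0 < lam /\ forall s, A lam s -> s < L + eta).
  { intros eta Heta; apply NNPP; intros Hn.
    enough (HLe : E (L + eta)) by (pose proof (HLub _ HLe); lra).
    intros lam Hlam; apply NNPP; intros HnA; apply Hn; exists lam; split; [exact Hlam|].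
    intros s Hs; apply Rnot_le_lt; intros Hle; exact (HnA (Hdown _ _ _ Hs Hle)). }
  assert (HL : L <= 0).
  { apply Rnot_lt_le; intros HLpos.
    set (eta := k * L / (4 + k)).
    assert (Heta : 0 < eta) by (unfold eta; apply Rdiv_lt_0_compat; nra).
    assert (Heta' : (4 + k) * eta = k * L) by (unfold eta; field; lra).
    destruct (Habove eta Heta) as (lam1 & Hlam1 & Hlam1_max).
    destruct (Hbelow eta Heta) as (s1 & Hs1 & Hs1_big).
    destruct (Hmerge lam1 s1 eta Hlam1 Heta (Hs1 lam1 Hlam1)) as (lam2 & Hlam2 & Hlam2_merge).
    destruct (Hbelow eta Heta) as (s2 & Hs2 & Hs2_big).
    pose proof (Hlam1_max _ (Hlam2_merge s2 (Hs2 lam2 Hlam2))).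
    nra. }
  intros e He; destruct (Habove e He) as (lam & Hlam & Hmax).
  exists lam; split; [exact Hlam|]; intros s Hs; pose proof (Hmax s Hs); lra.
Qed.

Lemma chain_pad01 (d : R -> R -> R) (l : list R) : (forall x y, 0 <= d x y) ->
  chain (fun y => 0 <= y <= 1) l ->
  exists q, StronglySorted Rlt (0 :: q ++ [1]) /\ chain_sum d l <= chain_sum d (0 :: q ++ [1]).
Proof.
  intros d_ge0 [Hs H01].
  assert (Hpad0 : exists l0, StronglySorted Rlt (0 :: l0) /\ Forall (fun y => y <= 1) l0 /\
                             chain_sum d l <= chain_sum d (0 :: l0)).
  { destruct l as [|x l].
    - exists []; repeat split; [repeat constructor | constructor | simpl; lra].
    - apply Forall_inv in H01 as Hx; apply Forall_inv_tail in H01 as H01'.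
      assert (Hle1 : Forall (fun y => y <= 1) (x :: l))
        by exact (Forall_impl _ (fun y (Hy : 0 <= y <= 1) => proj2 Hy) H01).
      destruct (Req_dec x 0) as [->|Hx0].
      + exists l; repeat split; [exact Hs | exact (Forall_inv_tail Hle1) | lra].
      + exists (x :: l); repeat split; [constructor; [exact Hs|] | exact Hle1 |].
        * apply StronglySorted_inv in Hs as [_ Hxl]; constructor; [lra|].
          exact (Forall_impl _ (fun y (Hy : x < y) => Rle_lt_trans 0 x y (proj1 Hx) Hy) Hxl).
        * exact (chain_sum_cons_ge d d_ge0 0 (x :: l)). }
  destruct Hpad0 as (l0 & Hs0 & Hle1 & Hsum).
  destruct l0 as [|z l0].
  - exists []; split; [repeat constructor; lra | simpl in *; pose proof (d_ge0 0 1); lra].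
  - destruct (exists_last (l := z :: l0) ltac:(discriminate)) as (q0 & y & Hq).
    rewrite Hq in *; clear z l0 Hq.
    apply Forall_app in Hle1 as [_ Hy%Forall_inv].
    destruct (Req_dec y 1) as [->|Hy1]; [exists q0; split; [exact Hs0 | exact Hsum]|].
    exists (q0 ++ [y]); split.
    + change (StronglySorted Rlt ((0 :: q0 ++ [y]) ++ [1])); apply StronglySorted_app_iff.
      repeat split; [exact Hs0 | repeat constructor |].
      intros x z Hx [<-|[]].
      change (In x ((0 :: q0) ++ [y])) in Hx; apply in_app_or in Hx as [Hx|[<-|[]]]; [|lra].
      change (StronglySorted Rlt ((0 :: q0) ++ [y])) in Hs0.
      apply StronglySorted_app_iff in Hs0 as (_ & _ & Hlt).
      pose proof (Hlt x y Hx (or_introl eq_refl)); lra.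
    + pose proof (chain_sum_app_ge d d_ge0 (0 :: q0 ++ [y]) [1]) as Hgrow.
      simpl (chain_sum d [1]) in Hgrow; rewrite Rplus_0_r in Hgrow.
      exact (Rle_trans _ _ _ Hsum Hgrow).
Qed.

Definition pjump (f : R -> Cpx) (p x y : R) : R := rpow (Cmod (Csub (f y) (f x))) p.

Definition small_at (f : R -> Cpx) (lam y : R) : Prop := 0 <= y <= 1 /\ Cmod (f y) < lam.

Lemma chain_sum_le_BVp (p M : R) (f : R -> Cpx) (l : list R) :
  (forall m t, is_partition01 m t -> pvar_sum p f m t <= M) ->
  chain (fun y => 0 <= y <= 1) l -> chain_sum (pjump f p) l <= M.
Proof.
  intros HM Hl.
  destruct (chain_pad01 (pjump f p) l (fun x y => rpow_ge0 _ p) Hl) as (q & Hs & Hsum).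
  set (r := 0 :: q ++ [1]) in *.
  assert (Hlen : length r = S (S (length q))) by (simpl; rewrite length_app; simpl; lia).
  rewrite <- (map_nth_seq r 0) in Hs, Hsum.
  rewrite chain_sum_map_seq, Hlen in Hsum.
  apply (Rle_trans _ _ _ Hsum), (HM (S (length q)) (fun i => nth i r 0)); split; [|split].
  - reflexivity.
  - change (nth (length q) (q ++ [1]) 0 = 1); rewrite app_nth2, Nat.sub_diag; reflexivity || lia.
  - intros i Hi; apply (proj1 (StronglySorted_map_seq _ 0 _) Hs); lia.
Qed.

Lemma pjump_small (f : R -> Cpx) (p lam x y : R) : 0 < p ->
  Cmod (f x) < lam -> Cmod (f y) < lam -> pjump f p x y <= rpow (2 * lam) p.
Proof.
  intros Hp Hx Hy; apply rpow_le_compat; [exact Hp|].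
  pose proof (Cmod_sub_le (f y) (f x)); pose proof (Cmod_ge0 (Csub (f y) (f x))); lra.
Qed.

Lemma pjump_detour (f : R -> Cpx) (p a b z w : R) : 0 < p ->
  / rpow 3 p * pjump f p a b <= pjump f p a z + pjump f p w b + pjump f p z w.
Proof.
  intros Hp; pose proof (rpow_pos 3 p ltac:(lra)) as H3.
  apply (Rmult_le_reg_l (rpow 3 p)); [exact H3|]; rewrite <- Rmult_assoc, Rinv_r, Rmult_1_l by lra.
  unfold pjump.
  pose proof (Cmod_sub_triangle (f b) (f w) (f a)); pose proof (Cmod_sub_triangle (f w) (f z) (f a)).
  pose proof (Cmod_ge0 (Csub (f z) (f a))); pose proof (Cmod_ge0 (Csub (f w) (f z)));
    pose proof (Cmod_ge0 (Csub (f b) (f w))).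
  eapply Rle_trans; [apply rpow_le_compat with (y := Cmod (Csub (f z) (f a)) +
      Cmod (Csub (f w) (f z)) + Cmod (Csub (f b) (f w))); [exact Hp | split; [apply Cmod_ge0 | lra]]|].
  eapply Rle_trans; [apply rpow_sum3_le; auto|].
  right; ring.
Qed.

Lemma small_chain_merge (f : R -> Cpx) (p lam1 eta : R) (l1 : list R) :
  0 < p -> 0 < lam1 -> 0 < eta -> chain (small_at f lam1) l1 ->
  exists lam2, 0 < lam2 /\ forall l2, chain (small_at f lam2) l2 ->
    exists l, chain (small_at f lam1) l /\
      / rpow 3 p * chain_sum (pjump f p) l1 + chain_sum (pjump f p) l2 - eta
        <= chain_sum (pjump f p) l.
Proof.
  intros Hp Hlam1 Heta Hl1.
  set (n := INR (length l1)); pose proof (pos_INR (length l1)) as Hn; fold n in Hn.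
  set (c := eta / (3 * n + 1)).
  assert (Hc : 0 < c) by (apply Rdiv_lt_0_compat; lra).
  assert (Hnc : 3 * n * c <= eta).
  { unfold c; apply (Rmult_le_reg_r (3 * n + 1)); [lra|].
    field_simplify; [nra | lra]. }
  set (lam2 := Rmin lam1 (rpow c (1 / p) / 2)).
  assert (Hr : 0 < rpow c (1 / p)) by exact (rpow_pos _ _ Hc).
  assert (Hlam2 : 0 < lam2 <= lam1) by (unfold lam2; split; [apply Rmin_glb_lt; lra | apply Rmin_l]).
  assert (Hlam2c : lam2 <= rpow c (1 / p) / 2) by apply Rmin_r.
  assert (Hth : rpow (2 * lam2) p <= c).
  { replace c with (rpow (rpow c (1 / p)) p)
      by (rewrite rpow_rpow by exact Hc; replace (1 / p * p) with 1 by (field; lra); apply rpow_1, Hc).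
    apply rpow_le_compat; lra. }
  assert (Hk : / rpow 3 p <= 1).
  { rewrite <- Rinv_1; apply Rinv_le_contravar; [lra|].
    unfold rpow; destruct (Rlt_dec 0 3) as [_|]; [|lra].
    rewrite <- (Rpower_O 3) by lra; apply Rle_Rpower; lra. }
  exists lam2; split; [lra|]; intros l2 Hl2.
  destruct (chain_merge (pjump f p) (small_at f lam1) (small_at f lam2) (/ rpow 3 p)
              (rpow (2 * lam2) p)) with (l1 := l1) (l2 := l2) as (l & Hl & Hsum); auto.
  - intros x y; apply rpow_ge0.
  - intros x [Hx01 Hx]; split; [exact Hx01 | lra].
  - intros x y [_ Hx] [_ Hy]; exact (pjump_small f p lam2 x y Hp Hx Hy).
  - intros a b z w [_ Hz] [_ Hw].
    pose proof (pjump_detour f p a b z w Hp); pose proof (pjump_small f p lam2 z w Hp Hz Hw); lra.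
  - apply rpow_ge0.
  - exists l; split; [exact Hl|]; fold n in Hsum.
    enough (3 * n * rpow (2 * lam2) p <= eta) by lra.
    apply Rle_trans with (3 * n * c); [apply Rmult_le_compat_l; lra | exact Hnc].
Qed.

Theorem lemma3p5 (p : R) (f : R -> Cpx) :
  1 <= p -> BVp p f ->
  forall eps : R, 0 < eps ->
  exists delta : R, 0 < delta /\
    forall (m : nat) (x : nat -> R),
      (forall j, (1 <= j <= m)%nat -> 0 <= x j <= 1) ->
      (forall j, (1 <= j < m)%nat -> x j < x (S j)) ->
      (forall j, (1 <= j <= m)%nat -> Cmod (f (x j)) < delta) ->
      rpow (rsum (m - 1) (fun i => rpow (Cmod (Csub (f (x (S (S i)))) (f (x (S i))))) p)) (1 / p)
        < eps.
Proof.
  intros Hp [M HM] eps Heps.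
  assert (H3 : 0 < / rpow 3 p) by (apply Rinv_0_lt_compat, rpow_pos; lra).
  destruct (mergeable_levels_vanish
              (fun lam s => exists l, chain (small_at f lam) l /\ s <= chain_sum (pjump f p) l)
              (/ rpow 3 p) M H3) with (e := rpow eps p) as (lam & Hlam & Hvanish).
  - intros lam s s' (l & Hl & Hs) Hs'; exists l; split; [exact Hl | lra].
  - intros lam _; exists []; split; [split; constructor | simpl; lra].
  - intros lam s (l & [Hs HG] & Hsum); apply (Rle_trans _ _ _ Hsum), (chain_sum_le_BVp p M f l HM).
    split; [exact Hs | exact (Forall_impl _ (fun y (Hy : small_at f lam y) => proj1 Hy) HG)].
  - intros lam1 s1 eta Hlam1 Heta (l1 & Hl1 & Hs1).
    destruct (small_chain_merge f p lam1 eta l1 ltac:(lra) Hlam1 Heta Hl1) as (lam2 & Hlam2 & Hmerge).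
    exists lam2; split; [exact Hlam2|]; intros s2 (l2 & Hl2 & Hs2).
    destruct (Hmerge l2 Hl2) as (l & Hl & Hsum); exists l; split; [exact Hl|].
    pose proof (Rmult_le_compat_l _ _ _ (Rlt_le _ _ H3) Hs1); lra.
  - apply rpow_pos, Heps.
  - exists lam; split; [exact Hlam|]; intros m x Hx Hinc Hf.
    apply rpow_inv_lt; [lra | exact Heps|].
    apply Hvanish; exists (map x (seq 1 m)); split; [split|].
    + apply StronglySorted_map_seq; intros j Hj1 Hjm; apply Hinc; lia.
    + apply Forall_forall; intros y (j & <- & Hj%in_seq)%in_map_iff.
      split; [apply Hx | apply Hf]; lia.
    + rewrite chain_sum_map_seq; apply Rle_refl.
Qed.
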